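(* There is a function $C_3(t,\epsilon)$ such that the following holds for every positive integer $t$ and every $\epsilon\in(0,1)$: let $G$ be a bipartite graph with $\delta(G)\geq C_3(t,\epsilon)$ which is induced $S_{t,t}$-free. Then for every path $x_1x_2x_3x_4$ of length $3$ in $G$ we have $|S_{N(x_1)}^{N(x_4)}(\epsilon)|\leq C_3(t,\epsilon)$.
   Context: For positive integers $a,b$, the biclaw $S_{a,b}$ is the graph with vertex set $\{x,x_1,\dots,x_a,y,y_1,\dots,y_b\}$ and edges $xy$, $xy_1,\dots,xy_b$, $yx_1,\dots,yx_a$. Induced $S_{t,t}$-free means no induced subgraph isomorphic to $S_{t,t}$. $N(v)$ is the neighbourhood of $v$, $\delta(G)$ the minimum degree. For vertex sets $X,Y$ and $\epsilon\in(0,1)$, $S_X^Y(\epsilon)=\{x\in X : |N(x)\cap Y|\leq (1-\epsilon)|Y|\}$. *)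

From HB Require Import structures.
From mathcomp Require Import all_boot all_order all_algebra.
From mathcomp Require Export reals.
Set Implicit Arguments. Unset Strict Implicit. Unset Printing Implicit Defensive.
Import Order.TTheory GRing.Theory Num.Theory.
Local Open Scope ring_scope.

Definition simple_graph (T : finType) (e : rel T) : Prop :=
  symmetric e /\ irreflexive e.

Definition bipartite (T : finType) (e : rel T) : Prop :=
  exists c : T -> bool, forall x y, e x y -> c x != c y.

Definition nbhd (T : finType) (e : rel T) (v : T) : {set T} := [set u | e v u].

Definition min_deg_ge (R : realType) (T : finType) (e : rel T) (d : R) : Prop :=
  forall v : T, d <= (#|nbhd e v|)%:R.

(* Vertices of the biclaw S_{a,b}:
   inl None = x, inl (Some i) = x_i, inr None = y, inr (Some j) = y_j. *)
Definition biclaw_vertex (a b : nat) : finType := (option 'I_a + option 'I_b)%type.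

Definition biclaw_adj (a b : nat) (u v : biclaw_vertex a b) : bool :=
  match u, v with
  | inl None, inr _ | inr _, inl None => true
  | inr None, inl _ | inl _, inr None => true
  | _, _ => false
  end.

Definition has_induced_biclaw (T : finType) (e : rel T) (a b : nat) : Prop :=
  exists f : biclaw_vertex a b -> T,
    injective f /\ forall u v, e (f u) (f v) = biclaw_adj u v.

Definition induced_biclaw_free (T : finType) (e : rel T) (t : nat) : Prop :=
  ~ has_induced_biclaw e t t.

Definition S_set (R : realType) (T : finType) (e : rel T) (X Y : {set T}) (eps : R)
  : {set T} :=
  [set x in X | (#|nbhd e x :&: Y|)%:R <= (1 - eps) * (#|Y|)%:R].

Definition path3 (T : finType) (e : rel T) (x1 x2 x3 x4 : T) : Prop :=
  uniq [:: x1; x2; x3; x4] /\ e x1 x2 /\ e x2 x3 /\ e x3 x4.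

From HB Require Import structures.
From mathcomp Require Import all_boot all_order all_algebra reals zify lra.
Import Order.TTheory GRing.Theory Num.Theory.
Set Implicit Arguments. Unset Strict Implicit. Unset Printing Implicit Defensive.

(* Put k = floor(1/eps) + 1, so that every vertex of S = S_{N(x1)}^{N(x4)}(eps) misses
   at least |N(x4)|/k vertices of N(x4).  The engine is a counting lemma: if uv is an
   edge, B is a large subset of N(u) and kt vertices of N(v) each miss a 1/k fraction
   of B, then averaging and pigeonholing their non-neighbourhoods yields t of them with
   t common non-neighbours in B, and together with uv these span an induced S_{t,t}.
   Hence few neighbours of v are far from B.  Along the path this gives z in N(x2)
   adjacent to more than half of S and of N(x3), then w in N(x3) /\ N(z) adjacent to
   all but a 1/(2k) fraction of N(x4); the lemma for the edge wz bounds |S /\ N(z)|,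
   and thereby |S|. *)

Definition far (T : finType) (e : rel T) (k : nat) (Y : {set T}) (x : T) : bool :=
  #|Y| <= k * #|Y :\: nbhd e x|.

(* Beyond this size, more than 2^(kt) (t-1) vertices of B are related to at least t
   elements of A, so t of them are related to the same elements. *)
Definition dense_bound (t k : nat) : nat := k * t * 2 ^ (k * t) * t.-1.

Section Counting.
Variable T : finType.
Implicit Types (A B X : {set T}) (r : rel T).

Lemma card_geq_subset A n : n <= #|A| -> exists2 A1 : {set T}, A1 \subset A & #|A1| = n.
Proof.
case/card_geqP => s [uniq_s size_s sA]; exists [set x in s].
  by apply/subsetP => x; rewrite inE; apply: sA.
by rewrite cardsE -size_s; apply/card_uniqP.
Qed.

Lemma exists_notin A B : #|B| < #|A| -> exists2 x, x \in A & x \notin B.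
Proof.
move=> ltBA; have /subsetPn [x xA xB] : ~~ (A \subset B).
  by apply: contraTN ltBA => /subset_leq_card; rewrite -leqNgt.
by exists x.
Qed.

Lemma card_set_sum A (P : pred T) : #|[set x in A | P x]| = \sum_(x in A) P x.
Proof. by rewrite -sum1dep_card big_mkcondr /=; apply: eq_bigr => x _; case: (P x). Qed.

Lemma sum_card_rel r A B :
  \sum_(a in A) #|[set b in B | r a b]| = \sum_(b in B) #|[set a in A | r a b]|.
Proof.
under eq_bigr do rewrite card_set_sum.
under [RHS]eq_bigr do rewrite card_set_sum.
exact: exchange_big.
Qed.

Lemma pigeonhole_fibre (U : finType) (f : T -> U) X (Y : {set U}) n :
  {in X, forall x, f x \in Y} -> #|Y| * n < #|X| ->
  exists2 y, y \in Y & n < #|[set x in X | f x == y]|.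
Proof.
move=> fXY ltYX.
have [/exists_inP //|] := boolP [exists y in Y, n < #|[set x in X | f x == y]|].
rewrite negb_exists_in => /forall_inP small.
suff: #|X| <= #|Y| * n by rewrite leqNgt ltYX.
rewrite -sum1_card (partition_big f (mem Y)) //= -sum_nat_const.
by apply: leq_sum => y yY; rewrite sum1dep_card leqNgt small.
Qed.

Lemma dense_rel_complete_pair r t k A B :
  0 < t -> 0 < k -> #|A| = k * t -> dense_bound t k < #|B| ->
  {in A, forall a, #|B| <= k * #|[set b in B | r a b]|} ->
  exists P F : {set T},
    [/\ P \subset A, F \subset B, t <= #|P|, t <= #|F| & {in P & F, forall a b, r a b}].
Proof.
move=> t_gt0 k_gt0 cardA bigB denseA.
pose p b := [set a in A | r a b].
have pA b : p b \subset A by rewrite /p setIdE subsetIl.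
pose H := [set b in B | t <= #|p b|].
have sum_ge : t * #|B| <= \sum_(b in B) #|p b|.
  rewrite -sum_card_rel -(leq_pmul2l k_gt0) mulnA -cardA -sum_nat_const big_distrr /=.
  exact: leq_sum.
have sum_le : \sum_(b in B) #|p b| <= k * t * #|H| + #|B| * t.-1.
  rewrite card_set_sum big_distrr /= -sum_nat_const -big_split /=.
  apply: leq_sum => b _; case: (leqP t #|p b|) => [_|lt_pb]; rewrite ?muln1 ?muln0.
    by rewrite -cardA (leq_trans (subset_leq_card (pA b))) ?leq_addr.
  by rewrite -ltnS prednK.
have BH : #|B| <= k * t * #|H|.
  move: sum_ge; rewrite -{1}(prednK t_gt0) mulSn; lia.
have [P] : exists2 P, P \in powerset A & t.-1 < #|[set b in H | p b == P]|.
  apply: pigeonhole_fibre => [b _|]; first by rewrite powersetE.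
  have kt_gt0 : 0 < k * t by rewrite muln_gt0 k_gt0.
  rewrite card_powerset cardA -(ltn_pmul2l kt_gt0) mulnA; exact: leq_trans bigB BH.
rewrite powersetE => sPA tF.
have /card_gt0P [b0] : 0 < #|[set b in H | p b == P]| by apply: leq_ltn_trans tF.
rewrite !inE => /andP [/andP [_ tb0] /eqP pb0].
exists P, [set b in H | p b == P]; split => //.
- by apply/subsetP => b; rewrite !inE => /andP [/andP [->]].
- by rewrite -pb0.
- by rewrite -(prednK t_gt0).
- move=> a b aP; rewrite !inE => /andP [_ /eqP pbP].
  by move: aP; rewrite -pbP inE => /andP [].
Qed.

End Counting.

Section FarVertices.
Variables (T : finType) (e : rel T).

Lemma not_far2_card_setI Y x : ~~ far e 2 Y x -> #|Y| < 2 * #|Y :&: nbhd e x|.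
Proof. by rewrite /far -ltnNge; have := cardsID (nbhd e x) Y; lia. Qed.

Lemma far_setI k Y Z x :
  far e k Y x -> 2 * k * #|Y :\: Z| < #|Y| -> far e (2 * k) (Y :&: Z) x.
Proof.
rewrite /far => farY smallYZ.
have cover : #|Y :\: nbhd e x| <= #|(Y :&: Z) :\: nbhd e x| + #|Y :\: Z|.
  apply: leq_trans (leq_card_setU _ _).1; apply: subset_leq_card.
  by apply/subsetP => y; rewrite !inE; case: (y \in Z); case: (y \in Y); case: (e x y).
have := leq_mul (leqnn k) cover; rewrite mulnDr.
have : #|Y :&: Z| <= #|Y| by rewrite subset_leq_card ?subsetIl.
lia.
Qed.

End FarVertices.

Definition path_bound (t k : nat) : nat :=
  dense_bound t 2 + 2 * dense_bound t (2 * k) + 4 * k * t.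

Section BipartiteGraph.
Variables (T : finType) (e : rel T) (c : T -> bool).
Hypothesis e_sym : symmetric e.
Hypothesis c_proper : forall x y, e x y -> c x != c y.

Lemma colour_nbr x y : e x y -> c y = ~~ c x.
Proof. by move/c_proper; case: (c x); case: (c y). Qed.

Lemma same_colour_nonadj x y : c x = c y -> e x y = false.
Proof. by move=> cxy; apply/negbTE/negP => /c_proper; rewrite cxy eqxx. Qed.

Lemma induced_biclaw_of_edge a b u v (P F : {set T}) :
  0 < a -> 0 < b -> e u v -> P \subset nbhd e v -> F \subset nbhd e u ->
  {in P & F, forall x y, ~~ e x y} -> a <= #|P| -> b <= #|F| ->
  has_induced_biclaw e a b.
Proof.
move=> a_gt0 b_gt0 euv /subsetP PNv /subsetP FNu PF aP bF.
pose gP (i : 'I_a) := enum_val (widen_ord aP i).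
pose gF (j : 'I_b) := enum_val (widen_ord bF j).
have gP_in i : gP i \in P := enum_valP _.
have gF_in j : gF j \in F := enum_valP _.
have gP_inj : injective gP by move=> i i' /enum_val_inj [] /val_inj.
have gF_inj : injective gF by move=> j j' /enum_val_inj [] /val_inj.
have nbhdE x y : (y \in nbhd e x) = e x y by rewrite inE.
have evP i : e v (gP i) by rewrite -nbhdE PNv.
have ePv i : e (gP i) v by rewrite e_sym evP.
have euF j : e u (gF j) by rewrite -nbhdE FNu.
have ePF i j : e (gP i) (gF j) = false by apply/negbTE/PF.
have cP i : c (gP i) = c u by rewrite (colour_nbr (evP i)) (colour_nbr euv) negbK.
have cF j : c (gF j) = c v by rewrite (colour_nbr (euF j)) (colour_nbr euv).
have cuv : c u != c v := c_proper euv.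
have uP : u \notin P.
  have /card_gt0P [y yF] := leq_trans b_gt0 bF.
  by apply/negP => uP; move: (PF _ _ uP yF); rewrite -nbhdE FNu.
have vF : v \notin F.
  have /card_gt0P [x xP] := leq_trans a_gt0 aP.
  by apply/negP => vF; move: (PF _ _ xP vF); rewrite e_sym -nbhdE PNv.
pose f (p : biclaw_vertex a b) : T :=
  match p with
  | inl None => u | inl (Some i) => gP i
  | inr None => v | inr (Some j) => gF j
  end.
have f_inj : injective f.
  move=> [[i|]|[j|]] [[i'|]|[j'|]] //= eq_f; first
    [ by rewrite (gP_inj _ _ eq_f) | by rewrite (gF_inj _ _ eq_f)
    | by move: uP; rewrite -eq_f gP_in | by move: uP; rewrite eq_f gP_in
    | by move: vF; rewrite -eq_f gF_in | by move: vF; rewrite eq_f gF_in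
    | by move/(congr1 c)/eqP: eq_f;
         rewrite ?cP ?cF ?(negbTE cuv) // eq_sym (negbTE cuv) ].
exists f; split=> // [[[i|]|[j|]] [[i'|]|[j'|]]] /=; first
  [ by apply: same_colour_nonadj; rewrite ?cP ?cF
  | by rewrite ?euv ?euF ?ePv ?ePF
  | by rewrite e_sym ?euv ?euF ?ePv ?ePF ].
Qed.

Section BiclawFree.
Variable t : nat.
Hypothesis t_gt0 : 0 < t.
Hypothesis biclaw_free : ~ has_induced_biclaw e t t.

Lemma card_far_nbrs_lt k u v (A B : {set T}) :
  0 < k -> e u v -> B \subset nbhd e u -> A \subset nbhd e v ->
  dense_bound t k < #|B| -> {in A, forall a, far e k B a} -> #|A| < k * t.
Proof.
move=> k_gt0 euv BNu ANv bigB farA; rewrite ltnNge; apply/negP.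
case/card_geq_subset => A1 sA1A cardA1.
have denseA1 : {in A1, forall a, #|B| <= k * #|[set b in B | ~~ e a b]|}.
  move=> a /(subsetP sA1A) /farA; rewrite /far.
  suff -> : [set b in B | ~~ e a b] = B :\: nbhd e a by [].
  by apply/setP => b; rewrite !inE andbC.
have [P [F [sPA1 sFB tP tF PF]]] := dense_rel_complete_pair t_gt0 k_gt0 cardA1 bigB denseA1.
apply: biclaw_free; apply: (induced_biclaw_of_edge t_gt0 t_gt0 euv _ _ PF tP tF).
  exact: subset_trans sPA1 (subset_trans sA1A ANv).
exact: subset_trans sFB BNu.
Qed.

Lemma exists_not_far k u v (A B : {set T}) :
  0 < k -> e u v -> B \subset nbhd e u -> A \subset nbhd e v ->
  dense_bound t k < #|B| -> k * t <= #|A| -> exists2 x, x \in A & ~~ far e k B x.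
Proof.
move=> k_gt0 euv BNu ANv bigB ktA.
have [|x xA] := exists_notin (A := A) (B := [set x in A | far e k B x]).
  apply: leq_trans ktA; apply: card_far_nbrs_lt euv BNu _ bigB _ => //.
    by apply: subset_trans ANv; rewrite setIdE subsetIl.
  by move=> x; rewrite inE => /andP [].
by rewrite inE xA => farx; exists x.
Qed.

Lemma exists_nbr_not_far2 v u1 u2 (B1 B2 : {set T}) :
  e u1 v -> e u2 v -> B1 \subset nbhd e u1 -> B2 \subset nbhd e u2 ->
  dense_bound t 2 < #|B1| -> dense_bound t 2 < #|B2| -> 4 * t <= #|nbhd e v| ->
  exists2 z, e v z & ~~ far e 2 B1 z && ~~ far e 2 B2 z.
Proof.
move=> e1 e2 B1N B2N big1 big2 deg.
have few u (B : {set T}) : e u v -> B \subset nbhd e u -> dense_bound t 2 < #|B| ->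
    #|[set z in nbhd e v | far e 2 B z]| < 2 * t.
  move=> euv BNu bigB; apply: card_far_nbrs_lt euv BNu _ bigB _ => //.
    by rewrite setIdE subsetIl.
  by move=> z; rewrite inE => /andP [].
have [|z] := exists_notin (A := nbhd e v)
  (B := [set z in nbhd e v | far e 2 B1 z] :|: [set z in nbhd e v | far e 2 B2 z]).
  by rewrite cardsU; have := few _ _ e1 B1N big1; have := few _ _ e2 B2N big2; lia.
by rewrite !inE => evz; rewrite evz negb_or; exists z.
Qed.

Lemma card_far_nbrs_path_le k x1 x2 x3 x4 :
  0 < k -> (forall v, path_bound t k <= #|nbhd e v|) ->
  e x1 x2 -> e x2 x3 -> e x3 x4 ->
  #|[set x in nbhd e x1 | far e k (nbhd e x4) x]| <= path_bound t k.
Proof.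
move=> k_gt0 deg e12 e23 e34.
set Y := nbhd e x4; set S := [set x in _ | _].
have kt_gt0 : 0 < k * t by rewrite muln_gt0 k_gt0.
have k2_gt0 : 0 < 2 * k by rewrite muln_gt0.
have degY := deg x4; have deg3 := deg x3; rewrite -/Y /path_bound in degY deg3.
have [smallS|bigS] := leqP #|S| (dense_bound t 2); first by rewrite /path_bound; lia.
have [z e2z /andP [nfarS nfar3]] :
    exists2 z, e x2 z & ~~ far e 2 S z && ~~ far e 2 (nbhd e x3) z.
  apply: exists_nbr_not_far2 e12 _ _ (subxx _) bigS _ _.
  - by rewrite e_sym.
  - by rewrite /S setIdE subsetIl.
  - by lia.
  - by have := deg x2; have := leq_pmull t k_gt0; rewrite /path_bound; lia.
have [w] : exists2 w, w \in nbhd e x3 :&: nbhd e z & ~~ far e (2 * k) Y w.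
  apply: (exists_not_far (u := x4)) k2_gt0 _ (subxx _) (subsetIl _ _) _ _.
  - by rewrite e_sym.
  - by rewrite -/Y; lia.
  - by have := not_far2_card_setI nfar3; rewrite setIC; lia.
rewrite !inE => /andP [_ zw]; rewrite /far -ltnNge => nfarY.
have farSz : {in S :&: nbhd e z, forall a, far e (2 * k) (Y :&: nbhd e w) a}.
  by move=> a; rewrite !inE => /andP [/andP [_ farYa] _]; apply: far_setI farYa nfarY.
have ewz : e w z by rewrite e_sym.
have bigB : dense_bound t (2 * k) < #|Y :&: nbhd e w|.
  by have := cardsID (nbhd e w) Y; have := leq_pmull #|Y :\: nbhd e w| k_gt0; lia.
have := card_far_nbrs_lt k2_gt0 ewz (subsetIr _ _) (subsetIr _ _) bigB farSz.
by have := not_far2_card_setI nfarS; rewrite /path_bound; lia.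
Qed.

End BiclawFree.

End BipartiteGraph.

Local Open Scope ring_scope.

Lemma S_set_subset_far (R : realType) (T : finType) (e : rel T) (X Y : {set T})
    (eps : R) k :
  1 <= k%:R * eps -> S_set e X Y eps \subset [set x in X | far e k Y x].
Proof.
move=> k_eps; apply/subsetP => x; rewrite !inE => /andP [-> /=].
rewrite /far -(ler_nat R) natrM -(cardsID (nbhd e x) Y) natrD setIC.
set a := #|_ :&: _|; set b := #|_ :\: _|.
by have := ler0n R a; have := ler0n R b; have := ler0n R k; nra.
Qed.

Lemma truncnS_inv_mul_ge1 (R : realType) (eps : R) :
  0 < eps -> 1 <= (Num.truncn eps^-1).+1%:R * eps.
Proof.
move=> eps_gt0; have := truncnS_gt eps^-1.
by rewrite -(ltr_pM2r eps_gt0) mulVf ?lt0r_neq0 // => /ltW.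
Qed.

Theorem mainTheorem6 (R : realType) :
  exists C3 : nat -> R -> R,
    forall (t : nat) (eps : R), (0 < t)%N -> 0 < eps < 1 ->
    forall (T : finType) (e : rel T),
      simple_graph e -> bipartite e ->
      min_deg_ge e (C3 t eps) -> induced_biclaw_free e t ->
      forall x1 x2 x3 x4 : T, path3 e x1 x2 x3 x4 ->
        (#|S_set e (nbhd e x1) (nbhd e x4) eps|)%:R <= C3 t eps.
Proof.
exists (fun t eps => (path_bound t (Num.truncn eps^-1).+1)%:R).
move=> t eps t_gt0 /andP [eps_gt0 _] T e [e_sym _] [c c_proper] deg biclaw_free.
(* The colouring already makes [e] irreflexive, and the path need not be simple. *)
move=> x1 x2 x3 x4 [_ [e12 [e23 e34]]].
rewrite ler_nat.
apply: leq_trans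
  (card_far_nbrs_path_le e_sym c_proper t_gt0 biclaw_free _ _ e12 e23 e34) => //.
- exact/subset_leq_card/S_set_subset_far/truncnS_inv_mul_ge1.
- by move=> v; rewrite -(ler_nat R); apply: deg.
Qed.
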